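(* For every integer $n\ge 4$ there exist a boolean classifier $\kappa:\{0,1\}^n\to\{0,1\}$ and a point $\mathbf v\in\{0,1\}^n$ such that, for the sample $(\mathbf v,\kappa(\mathbf v))$, there is an irrelevant feature $i\in\mathcal F$ with $|\mathrm{Sv}(j)|<|\mathrm{Sv}(i)|$ for every $j\in\mathcal F\setminus\{i\}$ (issue I5; in particular $|\mathrm{Sv}(i)|=\max_{j\in\mathcal F}|\mathrm{Sv}(j)|$).
   Context: Let $\mathcal F=\{1,\dots,n\}$. A boolean classifier is a non-constant function $\kappa:\{0,1\}^n\to\{0,1\}$; a sample is a pair $(\mathbf v,c)$ with $\mathbf v\in\{0,1\}^n$ and $c=\kappa(\mathbf v)$. For $\mathcal S\subseteq\mathcal F$ let $\Upsilon(\mathcal S;\mathbf v)=\{\mathbf x\in\{0,1\}^n : x_j=v_j \text{ for all } j\in\mathcal S\}$ and, for any function $g$ on $\{0,1\}^n$, $\mathbf E[g\mid \mathbf x_{\mathcal S}=\mathbf v_{\mathcal S}]=|\Upsilon(\mathcal S;\mathbf v)|^{-1}\sum_{\mathbf x\in\Upsilon(\mathcal S;\mathbf v)}g(\mathbf x)$ (uniform distribution, independent features). The characteristic function is $\upsilon(\mathcal S)=\mathbf E[\kappa\mid\mathbf x_{\mathcal S}=\mathbf v_{\mathcal S}]$, and the SHAP score of feature $i$ is $\mathrm{Sv}(i)=\sum_{\mathcal S\subseteq\mathcal F\setminus\{i\}}\frac{|\mathcal S|!\,(n-|\mathcal S|-1)!}{n!}\big(\upsilon(\mathcal S\cup\{i\})-\upsilon(\mathcal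 S)\big)$. The similarity predicate is $\sigma(\mathbf x)=1$ if $\kappa(\mathbf x)=\kappa(\mathbf v)$ and $0$ otherwise. A set $\mathcal S\subseteq\mathcal F$ is a weak abductive explanation (WAXp) if $\mathbf E[\sigma\mid\mathbf x_{\mathcal S}=\mathbf v_{\mathcal S}]=1$ (i.e. $\kappa(\mathbf x)=\kappa(\mathbf v)$ for all $\mathbf x\in\Upsilon(\mathcal S;\mathbf v)$); an abductive explanation (AXp) is a WAXp $\mathcal S$ such that $\mathcal S\setminus\{t\}$ is not a WAXp for every $t\in\mathcal S$. A feature is relevant if it belongs to at least one AXp, and irrelevant otherwise. *)

From mathcomp Require Import all_boot all_order all_algebra.
Set Implicit Arguments. Unset Strict Implicit. Unset Printing Implicit Defensive.
Import Order.TTheory GRing.Theory Num.Theory.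
Local Open Scope ring_scope.

(* A point of {0,1}^n; features are 'I_n (feature i+1 of the paper is i). *)
Definition point (n : nat) := {ffun 'I_n -> bool}.

Definition nonconstant (n : nat) (kappa : point n -> bool) : Prop :=
  exists x y : point n, kappa x != kappa y.

Definition Upsilon (n : nat) (S : {set 'I_n}) (v : point n) : {set point n} :=
  [set x : point n | [forall j in S, x j == v j]].

Definition cond_expect (n : nat) (g : point n -> rat) (S : {set 'I_n}) (v : point n) : rat :=
  (\sum_(x in Upsilon S v) g x) / (#|Upsilon S v|)%:R.

Definition charfun (n : nat) (kappa : point n -> bool) (v : point n) (S : {set 'I_n}) : rat :=
  cond_expect (fun x => (kappa x)%:R) S v.

Definition Sv (n : nat) (kappa : point n -> bool) (v : point n) (i : 'I_n) : rat :=
  \sum_(S : {set 'I_n} | i \notin S)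
     ((#|S|`! * (n - #|S| - 1)`!)%:R / (n`!)%:R) *
     (charfun kappa v (i |: S) - charfun kappa v S).

Definition sigma (n : nat) (kappa : point n -> bool) (v : point n) (x : point n) : rat :=
  (kappa x == kappa v)%:R.

Definition WAXp (n : nat) (kappa : point n -> bool) (v : point n) (S : {set 'I_n}) : Prop :=
  cond_expect (sigma kappa v) S v = 1.

Definition AXp (n : nat) (kappa : point n -> bool) (v : point n) (S : {set 'I_n}) : Prop :=
  WAXp kappa v S /\ forall t, t \in S -> ~ WAXp kappa v (S :\ t).

Definition relevant (n : nat) (kappa : point n -> bool) (v : point n) (i : 'I_n) : Prop :=
  exists S : {set 'I_n}, AXp kappa v S /\ i \in S.

Definition irrelevant (n : nat) (kappa : point n -> bool) (v : point n) (i : 'I_n) : Prop :=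
  ~ relevant kappa v i.

(* Take v = 1 and kappa x = ~~ x_i0 || (x == 1).  Conditioned on x_S = 1_S, the
   all-ones point is always positive, and when i0 \notin S so is every point with
   x_i0 = 0, i.e. half of them; hence upsilon(S) = 2^-|F\S| + [i0 \notin S]/2.
   Adding any feature to S raises upsilon by 2^-|F\S|, and adding i0 also lowers it
   by 1/2, so averaging with the Shapley weights gives Sv(j) = A := (1 - 2^-n)/n
   for j != i0 and Sv(i0) = A - 1/2; for n >= 4, 0 < A < 1/4.  Feature i0 is
   irrelevant: upsilon(S) = 1 with i0 in S forces S = F, but F \ {i0} is already
   a weak AXp. *)

From mathcomp Require Import all_boot all_order all_algebra.
From mathcomp Require Import ring lra zify.
Import Order.TTheory GRing.Theory Num.Theory.
Local Open Scope ring_scope.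

Lemma card_Upsilon n (S : {set 'I_n}) (v : point n) :
  #|Upsilon S v| = (2 ^ #|~: S|)%N.
Proof.
pose F j : pred bool := if j \in S then pred1 (v j) else predT.
have -> : #|Upsilon S v| = #|(family F : simpl_pred (point n))|.
  apply: eq_card => x; rewrite inE; apply/forallP/familyP => Hx j;
    by have := Hx j; rewrite /F; case: (j \in S).
rewrite card_family /image_mem foldrE big_map big_enum /=.
rewrite -prod_nat_const (bigID (mem S)) /= big1 ?mul1n => [|j jS]; last first.
  by rewrite /F jS card1.
apply: eq_big => [j|j /negbTE jS]; first by rewrite !inE.
by rewrite /F jS card_bool.
Qed.

Lemma sum_indicator (R : semiRingType) (T : finType) (P b : pred T) :
  \sum_(x | P x) (b x)%:R = #|[pred x | P x && b x]|%:R :> R.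
Proof.
rewrite -sum1_card natr_sum big_mkcond [RHS]big_mkcond; apply: eq_bigr => x _.
by rewrite !inE; case: (P x); case: (b x).
Qed.

Lemma cond_expect_sigma n (kappa : point n -> bool) (v : point n) S :
  kappa v -> cond_expect (sigma kappa v) S v = charfun kappa v S.
Proof.
move=> kv; rewrite /charfun /cond_expect /sigma; congr (_ / _).
by apply: eq_bigr => x _; rewrite kv; case: (kappa x).
Qed.

Lemma card_avoid_draws n (i : 'I_n) k :
  #|[pred S : {set 'I_n} | (i \notin S) && (#|S| == k)]| = 'C(n.-1, k).
Proof.
rewrite -[X in 'C(X.-1, _)](card_ord n) -(cardsC1 i) -cards_draws.
by apply: eq_card => S; rewrite !inE subsetC sub1set in_setC.
Qed.

Lemma shapley_weight_binomial (R : numFieldType) n k : (k < n)%N ->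
  'C(n.-1, k)%:R * ((k`! * (n - k - 1)`!)%:R / (n`!)%:R) = n%:R^-1 :> R.
Proof.
case: n => // n; rewrite ltnS => kn.
have fact_n : ('C(n, k) * (k`! * (n.+1 - k - 1)`!) * n.+1 = n.+1`!)%N.
  by rewrite subn1 subSKn bin_fact // factS mulnC.
rewrite -fact_n !natrM; field.
by rewrite nat1r /= !pnatr_eq0 -!lt0n !fact_gt0 bin_gt0 kn.
Qed.

Lemma shapley_weights_sum n (i : 'I_n) (f : nat -> rat) :
  \sum_(S : {set 'I_n} | i \notin S)
     ((#|S|`! * (n - #|S| - 1)`!)%:R / (n`!)%:R) * f #|S|
  = n%:R^-1 * \sum_(k < n) f k.
Proof.
pose w k : rat := (k`! * (n - k - 1)`!)%:R / (n`!)%:R.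
have card_lt (S : {set 'I_n}) : i \notin S -> (#|S| < n)%N.
  move=> iS; have := max_card (i |: S).
  by rewrite card_ord cardsU1 iS.
rewrite (eq_bigr (fun S : {set 'I_n} =>
    \sum_(k < n) (#|S| == k)%:R * (w k * f k))); last first.
  move=> S iS; rewrite (bigD1 (Ordinal (card_lt S iS))) //= eqxx mul1r big1 ?addr0 //.
  move=> k kS; suff /negbTE -> : #|S| != k by rewrite mul0r.
  by apply: contra kS => /eqP e; apply/eqP/val_inj.
rewrite exchange_big big_distrr /=; apply: eq_bigr => k _.
rewrite -big_distrl /= sum_indicator card_avoid_draws mulrA.
by rewrite shapley_weight_binomial.
Qed.

Lemma sum_geometric_half (R : numFieldType) n :
  \sum_(k < n) (2 : R) ^- (n - k) = 1 - 2 ^- n.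
Proof.
elim: n => [|n IH]; first by rewrite big_ord0 expr0 invr1 subrr.
rewrite big_ord_recr /= subSnn expr1.
rewrite (eq_bigr (fun k : 'I_n => 2^-1 * 2 ^- (n - k))) => [|k _]; last first.
  by rewrite subSn 1?ltnW // exprS invfM mulrC.
by rewrite -big_distrr /= IH exprS invfM; field; rewrite expf_neq0 ?pnatr_eq0.
Qed.

Definition ones n : point n := [ffun => true].

Definition negb_or_ones {n} (i0 : 'I_n) (x : point n) : bool := ~~ x i0 || (x == ones n).

Lemma cardsC_card n (S : {set 'I_n}) : #|~: S| = (n - #|S|)%N.
Proof. by rewrite cardsCs setCK card_ord. Qed.

Lemma cardsC_setU1 (T : finType) (S : {set T}) j :
  j \notin S -> #|~: S| = #|~: (j |: S)|.+1.
Proof. by move=> jS; rewrite (cardsD1 j (~: S)) in_setC jS setCU setDE setIC. Qed.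

Arguments cardsC_setU1 {T S j}.

Lemma charfun_negb_or_ones n (i0 : 'I_n) S :
  charfun (negb_or_ones i0) (ones n) S = 2 ^- #|~: S| + (i0 \notin S)%:R / 2.
Proof.
set U := Upsilon S (ones n).
have split_true : [set x in U | negb_or_ones i0 x] = ones n |: [set x in U | ~~ x i0].
  apply/setP => x; rewrite !inE /negb_or_ones.
  case: eqVneq => [->|_]; rewrite /= ?orbF //.
  by rewrite orbT andbT; apply/forall_inP.
rewrite /charfun /cond_expect sum_indicator.
rewrite -(cardsE [pred x | (x \in U) && negb_or_ones i0 x]) split_true cardsU1.
rewrite inE ffunE andbF add1n card_Upsilon.
rewrite natrX -natr1; case: (boolP (i0 \in S)) => i0S /=.
  have -> : #|[set x in U | ~~ x i0]| = 0%N.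
    apply/eqP; rewrite cards_eq0; apply/eqP/setP => x; rewrite !inE.
    apply/negbTE; rewrite negb_and negbK orbC.
    case: (boolP (x i0)) => //= xi0; apply: contraNN xi0.
    by move=> /forall_inP/(_ i0 i0S); rewrite ffunE => /eqP.
  by rewrite add0r mul1r mul0r addr0.
have -> : [set x in U | ~~ x i0] = Upsilon (i0 |: S) [ffun j => j != i0].
  apply/setP => x; rewrite !inE.
  apply/andP/forall_inP => [[/forall_inP xS xi0] j|xS].
    rewrite ffunE => /setU1P [->|jS]; first by rewrite eqxx (negbTE xi0).
    by rewrite (memPn i0S) //; have := xS j jS; rewrite ffunE.
  split; last by have := xS i0 (setU11 i0 S); rewrite ffunE eqxx => /eqP ->.
  apply/forall_inP => j jS; have := xS j (setU1r i0 jS).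
  by rewrite !ffunE (memPn i0S).
rewrite card_Upsilon (cardsC_setU1 i0S) natrX exprS.
by field; rewrite expf_neq0 ?pnatr_eq0.
Qed.

Lemma charfun_negb_or_ones_setU1 n (i0 j : 'I_n) (S : {set 'I_n}) : j \notin S ->
  charfun (negb_or_ones i0) (ones n) (j |: S) - charfun (negb_or_ones i0) (ones n) S
  = 2 ^- (n - #|S|) - (j == i0)%:R / 2.
Proof.
move=> jS; rewrite !charfun_negb_or_ones -cardsC_card (cardsC_setU1 jS) exprS.
rewrite in_setU1 negb_or; case: eqVneq => [->|_] /=; rewrite ?jS /=;
  by field; rewrite expf_neq0 ?pnatr_eq0.
Qed.

Lemma Sv_negb_or_ones n (i0 j : 'I_n) :
  Sv (negb_or_ones i0) (ones n) j = n%:R^-1 * (1 - 2 ^- n) - (j == i0)%:R / 2.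
Proof.
have n_gt0 : (0 < n)%N by case: n i0 {j} => [[]|].
pose f k : rat := 2 ^- (n - k) - (j == i0)%:R / 2.
rewrite /Sv; under eq_bigr => S jS do rewrite charfun_negb_or_ones_setU1 //.
rewrite (shapley_weights_sum _ j f) big_split /= sum_geometric_half sumr_const card_ord.
have n0 : n%:R != 0 :> rat by rewrite pnatr_eq0 -lt0n.
rewrite -[_ *+ n]mulr_natr.
by field; rewrite n0 expf_neq0 ?pnatr_eq0.
Qed.

Lemma irrelevant_negb_or_ones n (i0 : 'I_n) : irrelevant (negb_or_ones i0) (ones n) i0.
Proof.
have WAXpE S : WAXp (negb_or_ones i0) (ones n) S <->
    2 ^- #|~: S| + (i0 \notin S)%:R / 2 = 1 :> rat.
  rewrite /WAXp cond_expect_sigma ?charfun_negb_or_ones //.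
  by rewrite /negb_or_ones eqxx orbT.
move=> [S [[/WAXpE WS minS] i0S]]; apply: (minS i0 i0S); apply/WAXpE.
have /cards0_eq S_full : #|~: S| = 0%N.
  move: WS; rewrite i0S mul0r addr0 => /eqP.
  by rewrite invr_eq1 -natrX pnatr_eq1 -(expn0 2) eqn_exp2l // => /eqP.
by rewrite setCD S_full set0U cards1 setD11.
Qed.

Lemma nonconstant_negb_or_ones n (i0 j : 'I_n) : j != i0 -> nonconstant (negb_or_ones i0).
Proof.
move=> ji0; exists [ffun k => k == i0], (ones n).
rewrite /negb_or_ones !ffunE !eqxx /=.
apply/negP => /eqP/eqP fj_ones; have := congr1 (fun f : point n => f j) fj_ones.
by rewrite !ffunE (negbTE ji0).
Qed.

Lemma mean_geometric_half_bounds (R : realFieldType) n : (4 <= n)%N ->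
  0 < (n%:R^-1 * (1 - 2 ^- n) : R) < 4^-1.
Proof.
move=> n4; have t0 : (0 : R) < 2 ^- n by rewrite invr_gt0 exprn_gt0.
have t1 : (2 : R) ^- n < 1.
  by rewrite invf_lt1 ?exprn_gt0 // exprn_egt1 ?ltr1n //; lia.
have N0 : (0 : R) < n%:R^-1 by rewrite invr_gt0 ltr0n; lia.
have N1 : (n%:R^-1 : R) <= 4^-1.
  by rewrite lef_pV2 ?posrE ?ltr0n ?ler_nat //; lia.
have P : (0 : R) < n%:R^-1 * 2 ^- n by rewrite mulr_gt0.
rewrite mulr_gt0 ?subr_gt0 //= mulrBr mulr1; lra.
Qed.

Theorem proposition4 (n : nat) (hn : (4 <= n)%N) :
  exists (kappa : point n -> bool) (v : point n),
    nonconstant kappa /\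
    exists i : 'I_n, irrelevant kappa v i /\
      forall j : 'I_n, j != i -> `|Sv kappa v j| < `|Sv kappa v i|.
Proof.
have n_gt1 : (1 < n)%N by lia.
pose i0 : 'I_n := Ordinal (ltnW n_gt1).
pose j0 : 'I_n := Ordinal n_gt1.
exists (negb_or_ones i0), (ones n); split.
  exact: (@nonconstant_negb_or_ones _ i0 j0).
exists i0; split; first exact: irrelevant_negb_or_ones.
move=> j ji0; rewrite !Sv_negb_or_ones eqxx (negbTE ji0) mul0r subr0 mul1r.
have /andP [A_gt0 A_lt] := mean_geometric_half_bounds rat _ hn.
by rewrite ger0_norm ?ltW // ltr0_norm; lra.
Qed.
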